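(* Let $(a_n)_{n\in\mathbb{Z}}$ be the Somos-4 sequence, i.e. the unique sequence of positive rational numbers with $a_0=a_1=a_2=a_3=1$ and $$a_n\,a_{n-4}=a_{n-1}\,a_{n-3}+a_{n-2}^2\quad\text{for all } n\in\mathbb{Z}.$$ Then for all integers $s,t,u,v,w,x,y,z$, writing $(r_1,r_2,r_3,r_4)=(s,t,u,v)$ and $(c_1,c_2,c_3,c_4)=(w,x,y,z)$, the $4\times 4$ determinant $$\det\left[a_{r_i-c_j}\,a_{r_i+c_j}\right]_{1\le i,j\le 4}$$ is equal to $0$.
   Context: The sequence is extended to negative indices by the same recurrence (run backwards); all terms are positive, so it is well defined (e.g. $a_{-1}=2$, $a_4=2$, $a_5=3$, $a_6=7$, and $a_{3-n}=a_n$). The $(i,j)$ entry of the matrix is the product $a_{r_i-c_j}\,a_{r_i+c_j}$. *)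

From mathcomp Require Import all_boot all_order all_algebra.
Set Implicit Arguments. Unset Strict Implicit. Unset Printing Implicit Defensive.
Import Order.TTheory GRing.Theory Num.Theory.
Local Open Scope ring_scope.

Definition is_somos4 (a : int -> rat) : Prop :=
  (forall n : int, 0 < a n) /\
  (a 0 = 1 /\ a 1 = 1 /\ a 2 = 1 /\ a 3 = 1) /\
  (forall n : int, a n * a (n - 4) = a (n - 1) * a (n - 3) + a (n - 2) ^+ 2).

Definition somos_mx (a : int -> rat) (r c : 'I_4 -> int) : 'M[rat]_4 :=
  \matrix_(i < 4, j < 4) (a (r i - c j) * a (r i + c j)).

Definition vec4 (p q r s : int) (i : 'I_4) : int := nth 0 [:: p; q; r; s] i.

From mathcomp Require Import all_boot all_order all_algebra.
From mathcomp Require Import zify ring.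
Set Implicit Arguments. Unset Strict Implicit. Unset Printing Implicit Defensive.
Import Order.TTheory GRing.Theory Num.Theory.
Local Open Scope ring_scope.

(* The entries are given by a rank-2 bilinear form,
     a_{r-c} a_{r+c} = X_r A_c + Y_r B_c,
   with X_r = a_{r-1} a_{r+1}, Y_r = a_r^2 (the columns c = 1 and c = 0) and
   A_c, B_c quadratic in a_c, ..., a_{c+3}; hence every 4 x 4 minor vanishes.
   Both sides satisfy the discrete octahedron relation
     f(r+1, c) f(r-1, c) = f(r, c+1) f(r, c-1)
   and agree for c = 0, 1, so they agree everywhere by induction on c, all
   terms of the sequence being nonzero.  For the right-hand side the
   octahedron relation reduces to three quadratic relations among X, Y at
   r - 1, r, r + 1 and three among A, B at c - 1, c, c + 1, which follow from
   the Somos-4 recurrence and from the fact that its conserved quantity is 4. *)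

Lemma int_ind_shift (P : int -> Prop) :
  P 0 -> (forall n, P n -> P (n + 1)) -> (forall n, P (n + 1) -> P n) ->
  forall n, P n.
Proof.
move=> P0 up down; elim/int_rect => // k Pk; first by rewrite intS addrC; apply: up.
by apply: down; rewrite intS opprD addrAC subrr add0r.
Qed.

Lemma int_ind2 (P : int -> Prop) : P 0 -> P 1 ->
  (forall n, P (n - 1) -> P n -> P (n + 1)) ->
  (forall n, P n -> P (n + 1) -> P (n - 1)) ->
  forall n, P n.
Proof.
move=> P0 P1 up down n.
suff /(_ n)[] : forall n, P n /\ P (n + 1) by [].
apply: int_ind_shift => [|{}n [Pn Pn1]|{}n [Pn1 Pn2]]; first by rewrite add0r.
- by split=> //; apply: up; rewrite ?addrK.
- by split=> //; rewrite -(addrK 1 n); apply: down.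
Qed.

Lemma det_rank2 (R : comPzRingType) n (x y u v : 'I_n.+3 -> R) :
  \det (\matrix_(i, j) (x i * u j + y i * v j)) = 0.
Proof.
pose L := \matrix_(i < n.+3, k < n.+3) [:: x i; y i]`_k.
pose U := \matrix_(k < n.+3, j < n.+3) [:: u j; v j]`_k.
have -> : \matrix_(i, j) (x i * u j + y i * v j) = L *m U.
  apply/matrixP => i j; rewrite !mxE 2!big_ord_recl big1 => [|k _].
    by rewrite !mxE addr0.
  by rewrite !mxE nth_default ?mul0r.
rewrite det_mulmx (expand_det_row U (inord 2)) big1 ?mulr0 // => j _.
by rewrite mxE inordK // mul0r.
Qed.

Lemma eq_by_certificate (R : idomainType) (d x y c1 c2 c3 e1 e2 e3 : R) :
  d != 0 -> e1 = 0 -> e2 = 0 -> e3 = 0 ->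
  d * (x - y) = c1 * e1 + c2 * e2 + c3 * e3 -> x = y.
Proof.
move=> d0 -> -> ->; rewrite !mulr0 !addr0 => /eqP.
by rewrite mulf_eq0 (negPf d0) subr_eq0 => /eqP.
Qed.

Section Somos4Polynomials.
Variable R : comPzRingType.
Implicit Types p q r s t u : R.

Definition somos4_quad p q r s t : R := t * p - s * q - r ^+ 2.

(* [q r s (T - 4)], where [T = (t q^2 + s^2 p + r^3) / (q r s)] is the
   conserved quantity of the Somos-4 recurrence; [T = 4] on the window
   1, 1, 1, 1, 2. *)
Definition somos4_cubic p q r s t : R :=
  t * q ^+ 2 + s ^+ 2 * p + r ^+ 3 - 4 * s * r * q.

Lemma somos4_cubic_shift p q r s t u :
  q * somos4_cubic q r s t u - t * somos4_cubic p q r s t =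
  r ^+ 2 * somos4_quad q r s t u - s ^+ 2 * somos4_quad p q r s t.
Proof. by rewrite /somos4_cubic /somos4_quad; ring. Qed.

Lemma somos4_rowXX p q r s t : somos4_quad p q r s t = 0 ->
  r * t * (p * r) = r ^+ 2 * (q * s + r ^+ 2).
Proof.
move=> quad0; apply/eqP; rewrite -subr_eq0; apply/eqP.
transitivity (r ^+ 2 * somos4_quad p q r s t); first by rewrite /somos4_quad; ring.
by rewrite quad0 mulr0.
Qed.

Lemma somos4_rowXY p q r s t : somos4_cubic p q r s t = 0 ->
  r * t * q ^+ 2 + s ^+ 2 * (p * r) = 4 * (q * s) * r ^+ 2 - (r ^+ 2) ^+ 2.
Proof.
move=> cubic0; apply/eqP; rewrite -subr_eq0; apply/eqP.
transitivity (r * somos4_cubic p q r s t); first by rewrite /somos4_cubic; ring.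
by rewrite cubic0 mulr0.
Qed.

Lemma rank2_octahedron (X Y X1 Y1 X2 Y2 A B A1 B1 A2 B2 : R) :
  X1 * X2 = Y * (X + Y) -> Y1 * Y2 = X ^+ 2 ->
  X1 * Y2 + Y1 * X2 = 4 * X * Y - Y ^+ 2 ->
  A1 * A2 = B ^+ 2 -> B1 * B2 = A ^+ 2 - A * B ->
  A1 * B2 + B1 * A2 = A ^+ 2 + 4 * A * B ->
  (X1 * A + Y1 * B) * (X2 * A + Y2 * B) = (X * A1 + Y * B1) * (X * A2 + Y * B2).
Proof.
move=> XX YY XY AA BB AB.
have -> : (X1 * A + Y1 * B) * (X2 * A + Y2 * B) =
  A ^+ 2 * (X1 * X2) + A * B * (X1 * Y2 + Y1 * X2) + B ^+ 2 * (Y1 * Y2) by ring.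
have -> : (X * A1 + Y * B1) * (X * A2 + Y * B2) =
  X ^+ 2 * (A1 * A2) + X * Y * (A1 * B2 + B1 * A2) + Y ^+ 2 * (B1 * B2) by ring.
by rewrite XX YY XY AA BB AB; ring.
Qed.

End Somos4Polynomials.

Section Somos4Window.
Variable R : idomainType.
Variables p q r s t u : R.
Hypothesis quad0 : somos4_quad p q r s t = 0.
Hypothesis quad1 : somos4_quad q r s t u = 0.

Lemma somos4_cubic_succ : q != 0 ->
  somos4_cubic p q r s t = 0 -> somos4_cubic q r s t u = 0.
Proof.
move=> q_neq0 cubic0; have := somos4_cubic_shift p q r s t u.
rewrite quad0 quad1 cubic0 !mulr0 subrr subr0 => /eqP.
by rewrite mulf_eq0 (negPf q_neq0) => /eqP.
Qed.

Lemma somos4_cubic_pred : t != 0 ->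
  somos4_cubic q r s t u = 0 -> somos4_cubic p q r s t = 0.
Proof.
move=> t_neq0 cubic1; have := somos4_cubic_shift p q r s t u.
rewrite quad0 quad1 cubic1 !mulr0 subrr sub0r => /eqP.
by rewrite oppr_eq0 mulf_eq0 (negPf t_neq0) => /eqP.
Qed.

Hypothesis q_neq0 : q != 0.
Hypothesis cubic0 : somos4_cubic p q r s t = 0.

(* The multipliers [c1], [c2], [c3] were found by linear algebra over
   polynomials of bounded degree. *)

Lemma somos4_colAA : (r * u - s * t) * (p * s - q * r) = (2 * (r * s) - q * t) ^+ 2.
Proof.
apply: (eq_by_certificate (c1 := p * r * s - q * r ^+ 2) (c2 := r ^+ 2 * s)
  (c3 := r * s - q * t) q_neq0 quad1 quad0 cubic0).
by rewrite /somos4_quad /somos4_cubic; ring.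
Qed.

Lemma somos4_colBB :
  (2 * (s * t) - r * u) * (2 * (q * r) - p * s) =
  (q * t - r * s) ^+ 2 - (q * t - r * s) * (2 * (r * s) - q * t).
Proof.
apply: (eq_by_certificate (c1 := p * r * s - 2 * q * r ^+ 2) (c2 := r ^+ 2 * s)
  (c3 := r * s - 2 * q * t) q_neq0 quad1 quad0 cubic0).
by rewrite /somos4_quad /somos4_cubic; ring.
Qed.

Lemma somos4_colAB :
  (r * u - s * t) * (2 * (q * r) - p * s) + (2 * (s * t) - r * u) * (p * s - q * r) =
  (q * t - r * s) ^+ 2 + 4 * (q * t - r * s) * (2 * (r * s) - q * t).
Proof.
apply: (eq_by_certificate (c1 := 3 * q * r ^+ 2 - 2 * p * r * s)
  (c2 := - 2 * r ^+ 2 * s) (c3 := 3 * q * t - 2 * r * s) q_neq0 quad1 quad0 cubic0).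
by rewrite /somos4_quad /somos4_cubic; ring.
Qed.

End Somos4Window.

Section Somos4Sequence.
Variable R : idomainType.
Variable a : int -> R.

Lemma at_window (f : R -> R -> R -> R -> R -> R) n i0 i1 i2 i3 i4 :
  f (a n) (a (n + 1)) (a (n + 2)) (a (n + 3)) (a (n + 4)) = 0 ->
  i0 = n -> i1 = n + 1 -> i2 = n + 2 -> i3 = n + 3 -> i4 = n + 4 ->
  f (a i0) (a i1) (a i2) (a i3) (a i4) = 0.
Proof. by move=> ? -> -> -> -> ->. Qed.

Definition somos_entry r c := a (r - c) * a (r + c).

Lemma somos_entry_octahedron r c :
  somos_entry (r + 1) c * somos_entry (r - 1) c =
  somos_entry r (c + 1) * somos_entry r (c - 1).
Proof.
rewrite /somos_entry mulrACA [RHS]mulrACA [a (r - (c + 1)) * _]mulrC.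
by congr (a _ * a _ * (a _ * a _)); lia.
Qed.

Definition rowX r := a (r - 1) * a (r + 1).
Definition rowY r := a r ^+ 2.
Definition colA c := a c * a (c + 3) - a (c + 1) * a (c + 2).
Definition colB c := 2 * (a (c + 1) * a (c + 2)) - a c * a (c + 3).
Definition rank2_entry r c := rowX r * colA c + rowY r * colB c.

Hypothesis a_neq0 : forall n, a n != 0.
Hypothesis a_quad :
  forall n, somos4_quad (a n) (a (n + 1)) (a (n + 2)) (a (n + 3)) (a (n + 4)) = 0.
Hypotheses (a0 : a 0 = 1) (a1 : a 1 = 1) (a2 : a 2 = 1) (a3 : a 3 = 1).

Lemma a4 : a 4 = 2.
Proof.
have := a_quad 0; rewrite /somos4_quad !add0r a0 a1 a2 a3 mulr1 mul1r expr1n.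
by move/eqP; rewrite subr_eq0 subr_eq => /eqP.
Qed.

Lemma a_cubic n :
  somos4_cubic (a n) (a (n + 1)) (a (n + 2)) (a (n + 3)) (a (n + 4)) = 0.
Proof.
elim/int_ind_shift: n => [|n cubic_n|n cubic_n1].
- by rewrite /somos4_cubic !add0r a0 a1 a2 a3 a4; ring.
- apply: (somos4_cubic_succ (p := a n)) (a_neq0 _) _.
  + by apply: (at_window (a_quad n)); lia.
  + by apply: (at_window (a_quad (n + 1))); lia.
  + by apply: (at_window cubic_n); lia.
- apply: (somos4_cubic_pred (u := a (n + 5))) (a_neq0 _) _.
  + by apply: (at_window (a_quad n)); lia.
  + by apply: (at_window (a_quad (n + 1))); lia.
  + by apply: (at_window cubic_n1); lia.
Qed.

Lemma rowXX r : rowX (r + 1) * rowX (r - 1) = rowY r * (rowX r + rowY r).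
Proof.
rewrite /rowX /rowY addrK subrK; apply: somos4_rowXX.
by apply: (at_window (a_quad (r - 2))); lia.
Qed.

Lemma rowYY r : rowY (r + 1) * rowY (r - 1) = rowX r ^+ 2.
Proof. by rewrite /rowX /rowY; ring. Qed.

Lemma rowXY r :
  rowX (r + 1) * rowY (r - 1) + rowY (r + 1) * rowX (r - 1) =
  4 * rowX r * rowY r - rowY r ^+ 2.
Proof.
rewrite /rowX /rowY addrK subrK; apply: somos4_rowXY.
by apply: (at_window (a_cubic (r - 2))); lia.
Qed.

(* After [-addrA], indices such as [c + (1 + 1)] and [c + 2] are equal by
   computation, so both unify with the same variable of [somos4_colAA]. *)
Lemma colAA c : colA (c + 1) * colA (c - 1) = colB c ^+ 2.
Proof.
rewrite /colA /colB subrK -!(addrA c); apply: somos4_colAA.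
- by apply: (at_window (a_quad (c - 1))); lia.
- by apply: (at_window (a_quad c)); lia.
- exact: a_neq0.
- by apply: (at_window (a_cubic (c - 1))); lia.
Qed.

Lemma colBB c : colB (c + 1) * colB (c - 1) = colA c ^+ 2 - colA c * colB c.
Proof.
rewrite /colA /colB subrK -!(addrA c); apply: somos4_colBB.
- by apply: (at_window (a_quad (c - 1))); lia.
- by apply: (at_window (a_quad c)); lia.
- exact: a_neq0.
- by apply: (at_window (a_cubic (c - 1))); lia.
Qed.

Lemma colAB c :
  colA (c + 1) * colB (c - 1) + colB (c + 1) * colA (c - 1) =
  colA c ^+ 2 + 4 * colA c * colB c.
Proof.
rewrite /colA /colB subrK -!(addrA c); apply: somos4_colAB.
- by apply: (at_window (a_quad (c - 1))); lia.
- by apply: (at_window (a_quad c)); lia.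
- exact: a_neq0.
- by apply: (at_window (a_cubic (c - 1))); lia.
Qed.

Lemma rank2_entry_octahedron r c :
  rank2_entry (r + 1) c * rank2_entry (r - 1) c =
  rank2_entry r (c + 1) * rank2_entry r (c - 1).
Proof.
by apply: rank2_octahedron;
  [exact: rowXX | exact: rowYY | exact: rowXY | exact: colAA | exact: colBB | exact: colAB].
Qed.

Lemma colA0 : colA 0 = 0. Proof. by rewrite /colA !add0r a0 a1 a2 a3 subrr. Qed.
Lemma colB0 : colB 0 = 1. Proof. by rewrite /colB !add0r a0 a1 a2 a3; ring. Qed.
Lemma colA1 : colA 1 = 1. Proof. by rewrite /colA a1 a4 a2 a3; ring. Qed.
Lemma colB1 : colB 1 = 0. Proof. by rewrite /colB a1 a4 a2 a3; ring. Qed.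

Lemma somos_entry_rank2 r c : somos_entry r c = rank2_entry r c.
Proof.
have entry_neq0 r' c' : somos_entry r' c' != 0 by rewrite mulf_neq0.
elim/int_ind2: c r => [r|r|c IHm IH r|c IH IHp r].
- by rewrite /somos_entry /rank2_entry /rowY colA0 colB0 subr0; ring.
- by rewrite /rank2_entry colA1 colB1 mulr1 mulr0 addr0.
- apply: (mulIf (entry_neq0 r (c - 1))).
  by rewrite -somos_entry_octahedron !IH IHm rank2_entry_octahedron.
- apply: (mulfI (entry_neq0 r (c + 1))).
  by rewrite -somos_entry_octahedron !IH IHp rank2_entry_octahedron.
Qed.

End Somos4Sequence.

Lemma is_somos4_quad a : is_somos4 a ->
  forall n, somos4_quad (a n) (a (n + 1)) (a (n + 2)) (a (n + 3)) (a (n + 4)) = 0.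
Proof.
move=> [_ [_ rec]] n; have := rec (n + 4); rewrite addrK.
have -> : n + 4 - 1 = n + 3 by lia.
have -> : n + 4 - 2 = n + 2 by lia.
have -> : n + 4 - 3 = n + 1 by lia.
by rewrite /somos4_quad => ->; ring.
Qed.

Theorem corollary4 (a : int -> rat) (s t u v w x y z : int) :
  is_somos4 a ->
  \det (somos_mx a (vec4 s t u v) (vec4 w x y z)) = 0.
Proof.
move=> somos_a; have [a_pos [[a0 [a1 [a2 a3]]] _]] := somos_a.
have a_neq0 n : a n != 0 by rewrite lt0r_neq0.
have -> : somos_mx a (vec4 s t u v) (vec4 w x y z) =
  \matrix_(i, j) (rowX a (vec4 s t u v i) * colA a (vec4 w x y z j) +
                  rowY a (vec4 s t u v i) * colB a (vec4 w x y z j)).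
  apply/matrixP => i j; rewrite !mxE.
  exact: (somos_entry_rank2 a_neq0 (is_somos4_quad somos_a) a0 a1 a2 a3).
exact: det_rank2.
Qed.
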